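(* Let $F$ be a non-trivial subfunctor of the identity functor on the category of groups, and let $G$ be a group. Then there exists a simple group $S$ such that $G\subseteq S$ and $F(S)=S$; in particular $S$ lies in the essential image of $F$.
   Context: A subfunctor $F$ of the identity functor on the category of groups assigns to each group $G$ a subgroup $F(G)\subseteq G$ such that every homomorphism $f:G\to G'$ satisfies $f(F(G))\subseteq F(G')$; $F(f)$ is the restriction of $f$. It is non-trivial if $F(G)\neq 1$ for some group $G$. The essential image of a functor is the class of objects isomorphic to some value of the functor. *)

(* abstract (possibly infinite) groups, given as types with
   operations and the group axioms; the category of groups is the class of
   all such records (in a fixed universe). *)
Set Implicit Arguments.

Record group := Group {
  carrier :> Type;
  gmul : carrier -> carrier -> carrier;
  ginv : carrier -> carrier;
  gone : carrier;
  gmulA : forall x y z, gmul x (gmul y z) = gmul (gmul x y) z;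
  gmul1l : forall x, gmul gone x = x;
  gmulVl : forall x, gmul (ginv x) x = gone
}.

Arguments gmul {g}.
Arguments ginv {g}.
Arguments gone {g}.

Record hom (G H : group) := Hom {
  hfun :> G -> H;
  hfunM : forall x y, hfun (gmul x y) = gmul (hfun x) (hfun y)
}.

Definition is_subgroup (G : group) (P : G -> Prop) : Prop :=
  P gone /\ (forall x y, P x -> P y -> P (gmul x y)) /\
  (forall x, P x -> P (ginv x)).

Definition is_normal (G : group) (N : G -> Prop) : Prop :=
  @is_subgroup G N /\ forall x g, N x -> N (gmul (ginv g) (gmul x g)).

Definition simple_group (G : group) : Prop :=
  (exists x : G, x <> gone) /\
  forall N : G -> Prop, @is_normal G N ->
    (forall x, N x -> x = gone) \/ (forall x, N x).

Record subfunctor := Subfunctor {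
  sfun : forall G : group, G -> Prop;
  sfun_sub : forall G : group, @is_subgroup G (sfun G);
  sfun_nat : forall (G H : group) (f : hom G H) (x : G),
      sfun G x -> sfun H (f x)
}.

Definition nontrivial_subfunctor (F : subfunctor) : Prop :=
  exists (G : group) (x : G), sfun F G x /\ x <> gone.

(* Choose H with an element h <> 1 of F(H) and embed G × H into a simple group
   S. Conjugations are endomorphisms, so F(S) is a normal subgroup of S; it
   contains the image of h, hence F(S) = S.
   S is the direct limit of the tower L_0 = G × H,
   L_(k+1) = Sym(L_k × Z × (nat -> L_k × Z)), where L_k acts by left
   translation on the first coordinate. A swindle using the spare Z and stack
   coordinates shows that in Sym(L × Z × (nat -> L × Z)) the normal closure of
   any nontrivial translation contains every translation; so a nontrivial
   normal subgroup of the limit contains all of it. *)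

From Stdlib Require Import ZArith Lia Bool PeanoNat Eqdep_dec
  FunctionalExtensionality PropExtensionality ProofIrrelevance
  ClassicalEpsilon Classical.

Infix "·" := gmul (at level 40, left associativity).
Notation "x ⁻¹" := (ginv x) (at level 3, format "x ⁻¹").

Section GroupFacts.
Context {G : group}.
Implicit Types x y z : G.

Lemma mulgA x y z : x · (y · z) = x · y · z.
Proof. apply gmulA. Qed.

Lemma mul1g x : gone · x = x.
Proof. apply gmul1l. Qed.

Lemma mulVg x : x⁻¹ · x = gone.
Proof. apply gmulVl. Qed.

Lemma mulKg x y : x⁻¹ · (x · y) = y.
Proof. rewrite mulgA, mulVg, mul1g. reflexivity. Qed.

Lemma mulgI x y z : x · y = x · z -> y = z.
Proof. intro E. rewrite <- (mulKg x y), E, mulKg. reflexivity. Qed.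

Lemma mulgV x : x · x⁻¹ = gone.
Proof.
  rewrite <- (mul1g (x · x⁻¹)), <- (mulVg x⁻¹) at 1.
  rewrite <- mulgA, (mulgA x⁻¹ x), mulVg, mul1g, mulVg. reflexivity.
Qed.

Lemma mulg1 x : x · gone = x.
Proof. rewrite <- (mulVg x), mulgA, mulgV, mul1g. reflexivity. Qed.

Lemma mulKVg x y : x · (x⁻¹ · y) = y.
Proof. rewrite mulgA, mulgV, mul1g. reflexivity. Qed.

Lemma mul_eq1_invg x y : x · y = gone -> y = x⁻¹.
Proof. intro E. apply (mulgI x). rewrite E, mulgV. reflexivity. Qed.

Lemma mulV_eq1 x y : x⁻¹ · y = gone -> x = y.
Proof. intro E. rewrite <- (mulKVg x y), E, mulg1. reflexivity. Qed.

Lemma invgK x : x⁻¹⁻¹ = x.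
Proof. symmetry. apply mul_eq1_invg, mulVg. Qed.

Lemma invMg x y : (x · y)⁻¹ = y⁻¹ · x⁻¹.
Proof.
  symmetry. apply mul_eq1_invg.
  rewrite <- mulgA, (mulgA y), mulgV, mul1g, mulgV. reflexivity.
Qed.

Lemma invg1 : (@gone G)⁻¹ = gone.
Proof. symmetry. apply mul_eq1_invg, mul1g. Qed.

End GroupFacts.

Lemma hom1 {G H : group} (f : hom G H) : f gone = gone.
Proof. apply (mulgI (f gone)). rewrite <- hfunM, mul1g, mulg1. reflexivity. Qed.

Lemma homV {G H : group} (f : hom G H) (x : G) : f x⁻¹ = (f x)⁻¹.
Proof. apply mul_eq1_invg. rewrite <- hfunM, mulgV, hom1. reflexivity. Qed.

Definition hcomp {A B C : group} (g : hom B C) (f : hom A B) : hom A C.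
Proof.
  refine (@Hom A C (fun x => g (f x)) _).
  intros x y. rewrite !hfunM. reflexivity.
Defined.

Definition conj_hom {G : group} (g : G) : hom G G.
Proof.
  refine (@Hom G G (fun x => g⁻¹ · (x · g)) _).
  intros x y. rewrite <- !mulgA, mulKVg. reflexivity.
Defined.

Section Normal.
Context {G : group} (N : G -> Prop) (HN : is_normal _ N).

Lemma normal1 : N gone.
Proof. apply HN. Qed.

Lemma normalM x y : N x -> N y -> N (x · y).
Proof. apply HN. Qed.

Lemma normalV x : N x -> N x⁻¹.
Proof. apply HN. Qed.

Lemma normalJ x g : N x -> N (g · (x · g⁻¹)).
Proof. intro Nx. rewrite <- (invgK g) at 1. apply HN, Nx. Qed.

(* Here [b = s a s⁻¹] and [c = b r b⁻¹ r⁻¹]; as [r] commutes with [a], the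
   commutator [c] is a product of conjugates of [s] and [s⁻¹]. *)
Lemma normal_commutator s a r b c :
  N s -> s · a = b · s -> a · r = r · a -> b · r = c · (r · b) -> N c.
Proof.
  intros Ns Hb Har Hc.
  assert (Eb : b = s · (a · s⁻¹)).
  { rewrite mulgA, Hb, <- mulgA, mulgV, mulg1. reflexivity. }
  assert (Ec : c = b · (r · (b⁻¹ · r⁻¹))).
  { rewrite mulgA, Hc, <- !mulgA, (mulgA b b⁻¹), mulgV, mul1g, mulgV, mulg1.
    reflexivity. }
  set (d := a · (s · (a⁻¹ · s⁻¹))).
  assert (Nd : N d).
  { unfold d. rewrite mulgA, mulgA. apply normalM; [|apply normalV, Ns].
    rewrite <- mulgA. apply normalJ, Ns. }
  replace c with (d⁻¹ · (r · (d · r⁻¹))).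
  - apply normalM; [apply normalV, Nd | apply normalJ, Nd].
  - rewrite Ec, Eb. unfold d. rewrite !invMg, !invgK, <- !mulgA.
    rewrite (mulgA r a), <- Har, <- (mulgA a r), mulKg. reflexivity.
Qed.

End Normal.

Lemma normal_preimage {A B : group} (f : hom A B) (N : B -> Prop) :
  is_normal _ N -> is_normal _ (fun a => N (f a)).
Proof.
  intro HN. split; [split; [|split]|].
  - rewrite hom1. apply normal1, HN.
  - intros x y Nx Ny. rewrite hfunM. apply normalM; assumption.
  - intros x Nx. rewrite homV. apply normalV; assumption.
  - intros x g Nx. rewrite !hfunM, homV. apply (proj2 HN), Nx.
Qed.

Record perm (X : Type) := Perm {
  pf : X -> X;
  pg : X -> X;
  pfK : forall x, pf (pg x) = x;
  pgK : forall x, pg (pf x) = x }.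
Arguments Perm {X}.
Arguments pf {X}.
Arguments pg {X}.
Arguments pfK {X}.
Arguments pgK {X}.

Lemma perm_ext {X : Type} (p q : perm X) : (forall x, pf p x = pf q x) -> p = q.
Proof.
  destruct p as [f g fK gK], q as [f' g' fK' gK']; simpl; intro E.
  assert (Ef : f = f') by (apply functional_extensionality; exact E).
  subst f'.
  assert (Eg : g = g').
  { apply functional_extensionality; intro x.
    rewrite <- (fK' x) at 1. apply gK. }
  subst g'. f_equal; apply proof_irrelevance.
Qed.

Definition perm_mul {X : Type} (p q : perm X) : perm X.
Proof.
  refine (Perm (fun x => pf p (pf q x)) (fun x => pg q (pg p x)) _ _).
  - intro x. rewrite !pfK. reflexivity.
  - intro x. rewrite !pgK. reflexivity.
Defined.

Definition perm_inv {X : Type} (p : perm X) : perm X :=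
  Perm (pg p) (pf p) (pgK p) (pfK p).

Definition perm_one (X : Type) : perm X :=
  Perm (fun x => x) (fun x => x) (fun x => eq_refl) (fun x => eq_refl).

Definition Sym (X : Type) : group.
Proof.
  refine (@Group (perm X) perm_mul perm_inv (perm_one X) _ _ _);
    intros; apply perm_ext; intros; simpl; [reflexivity | reflexivity | apply pgK].
Defined.
Canonical Sym.

Definition ProdG (A B : group) : group.
Proof.
  refine (@Group (A * B)%type
    (fun p q => (fst p · fst q, snd p · snd q))
    (fun p => ((fst p)⁻¹, (snd p)⁻¹)) (gone, gone) _ _ _).
  - intros [a1 b1] [a2 b2] [a3 b3]; simpl; rewrite !mulgA; reflexivity.
  - intros [a b]; simpl; rewrite !mul1g; reflexivity.
  - intros [a b]; simpl; rewrite !mulVg; reflexivity.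
Defined.

Definition inl_hom (A B : group) : hom A (ProdG A B).
Proof.
  refine (@Hom A (ProdG A B) (fun a => (a, gone)) _).
  intros x y. simpl. rewrite mul1g. reflexivity.
Defined.

Definition inr_hom (A B : group) : hom B (ProdG A B).
Proof.
  refine (@Hom B (ProdG A B) (fun b => (gone, b)) _).
  intros x y. simpl. rewrite mul1g. reflexivity.
Defined.

Section Quotient.
Context {G : group} {N : G -> Prop} (HN : is_normal _ N).

Definition coset (a : G) : G -> Prop := fun b => N (a⁻¹ · b).

Definition quot := {C : G -> Prop | exists a, C = coset a}.

Definition qpi (a : G) : quot := exist _ (coset a) (ex_intro _ a eq_refl).

Lemma qpi_eq a b : qpi a = qpi b <-> N (a⁻¹ · b).
Proof.
  split.
  - intro E.
    assert (Hb : proj1_sig (qpi b) b).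
    { simpl. unfold coset. rewrite mulVg. apply normal1, HN. }
    rewrite <- E in Hb. exact Hb.
  - intro Nab. apply eq_sig_hprop; [intros; apply proof_irrelevance|]. simpl.
    apply functional_extensionality; intro c. apply propositional_extensionality.
    unfold coset. split; intro Nc.
    + replace (b⁻¹ · c) with ((a⁻¹ · b)⁻¹ · (a⁻¹ · c))
        by (rewrite invMg, invgK, <- mulgA, mulKVg; reflexivity).
      apply normalM, Nc; [exact HN|]. apply normalV; assumption.
    + replace (a⁻¹ · c) with (a⁻¹ · b · (b⁻¹ · c))
        by (rewrite <- mulgA, mulKVg; reflexivity).
      apply normalM; assumption.
Qed.

Lemma qpi_surj (C : quot) : exists a, C = qpi a.
Proof.
  destruct C as [C [a ->]]. exists a.
  apply eq_sig_hprop; [intros; apply proof_irrelevance | reflexivity].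
Qed.

Definition qrep (C : quot) : G :=
  proj1_sig (constructive_indefinite_description _ (qpi_surj C)).

Lemma qrepK (C : quot) : qpi (qrep C) = C.
Proof.
  unfold qrep. destruct (constructive_indefinite_description _ _). simpl.
  symmetry. assumption.
Qed.

Lemma qrep_pi a : N ((qrep (qpi a))⁻¹ · a).
Proof. apply qpi_eq, qrepK. Qed.

Definition qmul (C D : quot) : quot := qpi (qrep C · qrep D).
Definition qinv (C : quot) : quot := qpi (qrep C)⁻¹.

Lemma qmul_pi a b : qmul (qpi a) (qpi b) = qpi (a · b).
Proof.
  unfold qmul. apply qpi_eq.
  pose proof (qrep_pi a) as Na. pose proof (qrep_pi b) as Nb.
  set (a' := qrep (qpi a)) in *. set (b' := qrep (qpi b)) in *.
  replace ((a' · b')⁻¹ · (a · b))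
    with (b'⁻¹ · (a'⁻¹ · a · b') · (b'⁻¹ · b)).
  - apply normalM; [exact HN| |exact Nb].
    rewrite <- (invgK b') at 2. apply normalJ; assumption.
  - rewrite invMg, <- !mulgA, mulKVg. reflexivity.
Qed.

Lemma qinv_pi a : qinv (qpi a) = qpi a⁻¹.
Proof.
  unfold qinv. apply qpi_eq.
  pose proof (qrep_pi a) as Na. set (a' := qrep (qpi a)) in *.
  rewrite invgK.
  replace (a' · a⁻¹) with (a' · ((a'⁻¹ · a)⁻¹ · a'⁻¹))
    by (rewrite invMg, invgK, <- !mulgA, mulgV, mulg1; reflexivity).
  apply normalJ, normalV; assumption.
Qed.

Definition QuotG : group.
Proof.
  refine (@Group quot qmul qinv (qpi gone) _ _ _).
  - intros x y z.
    destruct (qpi_surj x) as [a ->], (qpi_surj y) as [b ->], (qpi_surj z) as [c ->].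
    rewrite !qmul_pi, mulgA. reflexivity.
  - intros x. destruct (qpi_surj x) as [a ->]. rewrite qmul_pi, mul1g. reflexivity.
  - intros x. destruct (qpi_surj x) as [a ->].
    rewrite qinv_pi, qmul_pi, mulVg. reflexivity.
Defined.

Definition quot_hom : hom G QuotG.
Proof.
  refine (@Hom G QuotG qpi _).
  intros x y. simpl. rewrite qmul_pi. reflexivity.
Defined.

End Quotient.

Definition eqbc {A : Type} (a b : A) : bool :=
  if excluded_middle_informative (a = b) then true else false.

Lemma eqbcP {A : Type} (a b : A) : reflect (a = b) (eqbc a b).
Proof. unfold eqbc. destruct (excluded_middle_informative (a = b)); constructor; assumption. Qed.

Lemma eqbc_refl {A : Type} (a : A) : eqbc a a = true.
Proof. destruct (eqbcP a a); [reflexivity | contradiction]. Qed.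

Lemma eqbc_neq {A : Type} (a b : A) : a <> b -> eqbc a b = false.
Proof. intro E. destruct (eqbcP a b); [contradiction | reflexivity]. Qed.

Lemma odd_div2K (n : Z) : Z.odd n = true -> (2 * Z.div2 n + 1)%Z = n.
Proof.
  intro Hn. pose proof (Z.div2_odd n) as D. rewrite Hn in D.
  change (Z.b2z true) with 1%Z in D. lia.
Qed.

Lemma div2_oddK (k : Z) : Z.div2 (2 * k + 1) = k.
Proof.
  pose proof (Z.div2_odd (2 * k + 1)) as D. rewrite Z.odd_odd in D.
  change (Z.b2z true) with 1%Z in D. lia.
Qed.

Definition stack (A : Type) := (nat -> A * Z)%type.

Definition swindle_space (L : group) := (L * Z * stack L)%type.

Definition stl {A : Type} (m : nat -> A) : nat -> A := fun k => m (S k).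

Definition scons {A : Type} (a : A) (m : nat -> A) : nat -> A :=
  fun k => match k with 0 => a | S k => m k end.

Lemma scons_stl {A : Type} (m : nat -> A) : scons (m 0) (stl m) = m.
Proof. apply functional_extensionality; intros [|k]; reflexivity. Qed.

Section Swindle.
Variable L : group.
Local Notation X := (swindle_space L).

Definition lmul (y : L) : perm X.
Proof.
  refine (Perm (fun '(h, n, m) => (y · h, n, m)) (fun '(h, n, m) => (y⁻¹ · h, n, m)) _ _);
    intros [[h n] m]; rewrite ?mulKg, ?mulKVg; reflexivity.
Defined.

Definition lmul_hom : hom L (Sym X).
Proof.
  refine (@Hom L (Sym X) lmul _).
  intros a b. apply perm_ext. intros [[h n] m]. simpl. rewrite mulgA. reflexivity.
Defined.

Lemma lmul_inj (a b : L) : lmul a = lmul b -> a = b.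
Proof.
  intro E. pose proof (f_equal (fun p => pf p (gone, 0%Z, fun _ => (gone, 0%Z))) E) as Ea.
  simpl in Ea. injection Ea. rewrite !mulg1. tauto.
Qed.

Definition stack_if (Q : L -> Z -> bool) (g : perm (stack L)) : perm X.
Proof.
  refine (Perm (fun '(h, n, m) => if Q h n then (h, n, pf g m) else (h, n, m))
               (fun '(h, n, m) => if Q h n then (h, n, pg g m) else (h, n, m)) _ _);
    intros [[h n] m]; destruct (Q h n) eqn:E; rewrite ?E, ?pfK, ?pgK; reflexivity.
Defined.

Lemma stack_if_pf (Q : L -> Z -> bool) (g : perm (stack L)) h n m :
  pf (stack_if Q g) (h, n, m) = if Q h n then (h, n, pf g m) else (h, n, m).
Proof. reflexivity. Qed.

Definition head_mul_fun (y : L) (m : stack L) : stack L :=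
  scons (y · fst (m 0), snd (m 0)) (stl m).

Lemma head_mul_funK (y : L) (m : stack L) : head_mul_fun y⁻¹ (head_mul_fun y m) = m.
Proof.
  apply functional_extensionality; intros [|k]; simpl; [|reflexivity].
  rewrite mulKg. destruct (m 0); reflexivity.
Qed.

Lemma head_mul_funKV (y : L) (m : stack L) : head_mul_fun y (head_mul_fun y⁻¹ m) = m.
Proof.
  apply functional_extensionality; intros [|k]; simpl; [|reflexivity].
  rewrite mulKVg. destruct (m 0); reflexivity.
Qed.

Definition head_mul (y : L) : perm (stack L) :=
  Perm (head_mul_fun y) (head_mul_fun y⁻¹) (head_mul_funKV y) (head_mul_funK y).

Definition ray_mul (c y : L) : perm X :=
  stack_if (fun h n => eqbc h c && (0 <=? n)%Z) (head_mul y).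

Definition origin_mul (c y : L) : perm X :=
  stack_if (fun h n => eqbc h c && (n =? 0)%Z) (head_mul y).

Definition shift_at (c : L) : perm X.
Proof.
  refine (Perm (fun '(h, n, m) => if eqbc h c then (h, (n + 1)%Z, m) else (h, n, m))
               (fun '(h, n, m) => if eqbc h c then (h, (n - 1)%Z, m) else (h, n, m)) _ _);
    intros [[h n] m]; destruct (eqbc h c) eqn:E; rewrite ?E;
    f_equal; f_equal; lia.
Defined.

Definition shift : perm X.
Proof.
  refine (Perm (fun '(h, n, m) => (h, (n + 1)%Z, m)) (fun '(h, n, m) => (h, (n - 1)%Z, m)) _ _);
    intros [[h n] m]; f_equal; f_equal; lia.
Defined.

(* The involution swapping the origin [(c, 0)] of the fibre of [c] with the
   odd levels of all fibres: an odd point [(h, 2k+1)] is pushed onto the stack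
   as [(h, k)], and popped back from the stack at the origin. *)
Definition fold_fun (c : L) (p : X) : X :=
  let '(h, n, m) := p in
  if eqbc h c && (n =? 0)%Z then (fst (m 0), (2 * snd (m O) + 1)%Z, stl m)
  else if Z.odd n then (c, 0%Z, scons (h, Z.div2 n) m)
  else p.

Lemma fold_fun_origin (c : L) (m : stack L) :
  fold_fun c (c, 0%Z, m) = (fst (m 0), (2 * snd (m O) + 1)%Z, stl m).
Proof. simpl. rewrite eqbc_refl. reflexivity. Qed.

Lemma fold_fun_odd (c h : L) (n : Z) (m : stack L) : Z.odd n = true ->
  fold_fun c (h, n, m) = (c, 0%Z, scons (h, Z.div2 n) m).
Proof.
  intro Hn. simpl. replace (n =? 0)%Z with false.
  - rewrite andb_false_r, Hn. reflexivity.
  - symmetry. apply Z.eqb_neq. intros ->. discriminate.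
Qed.

Lemma fold_fun_fix (c h : L) (n : Z) (m : stack L) :
  eqbc h c && (n =? 0)%Z = false -> Z.odd n = false -> fold_fun c (h, n, m) = (h, n, m).
Proof. intros E1 E2. simpl. rewrite E1, E2. reflexivity. Qed.

Lemma fold_funK (c : L) (p : X) : fold_fun c (fold_fun c p) = p.
Proof.
  destruct p as [[h n] m].
  destruct (eqbc h c && (n =? 0)%Z) eqn:E1; [|destruct (Z.odd n) eqn:Eo].
  - apply andb_true_iff in E1. destruct E1 as [E1 E2].
    destruct (eqbcP h c); [subst h | discriminate]. apply Z.eqb_eq in E2. subst n.
    rewrite fold_fun_origin, fold_fun_odd by apply Z.odd_odd.
    rewrite div2_oddK, <- surjective_pairing, scons_stl. reflexivity.
  - rewrite fold_fun_odd, fold_fun_origin by exact Eo. cbn [fst snd scons].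
    rewrite odd_div2K by exact Eo. reflexivity.
  - rewrite !fold_fun_fix by assumption. reflexivity.
Qed.

Definition fold (c : L) : perm X := Perm (fold_fun c) (fold_fun c) (fold_funK c) (fold_funK c).

Definition parity_mul (y : L) (b : bool) : perm X.
Proof.
  refine (Perm (fun '(h, n, m) => if Bool.eqb (Z.odd n) b then (y · h, n, m) else (h, n, m))
               (fun '(h, n, m) => if Bool.eqb (Z.odd n) b then (y⁻¹ · h, n, m) else (h, n, m))
               _ _);
    intros [[h n] m]; destruct (Bool.eqb (Z.odd n) b) eqn:E; rewrite ?E, ?mulKg, ?mulKVg;
    reflexivity.
Defined.

Lemma parity_mul_pf (y : L) (b : bool) h n m :
  pf (parity_mul y b) (h, n, m) = if Bool.eqb (Z.odd n) b then (y · h, n, m) else (h, n, m).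
Proof. reflexivity. Qed.

Section Relations.
Variables x y : L.

Lemma lmul_ray : lmul x · ray_mul gone y = ray_mul x y · lmul x.
Proof.
  apply perm_ext. intros [[h n] m]. simpl.
  destruct (eqbcP h gone) as [->|Hh].
  - rewrite mulg1, !eqbc_refl. destruct (0 <=? n)%Z; simpl; rewrite ?mulg1; reflexivity.
  - rewrite (eqbc_neq (x · h) x); [reflexivity|].
    intro E. apply Hh, (mulgI x). rewrite mulg1. exact E.
Qed.

Lemma ray_shift_at_comm : x <> gone ->
  ray_mul gone y · shift_at x = shift_at x · ray_mul gone y.
Proof.
  intro Hx. apply perm_ext. intros [[h n] m]. simpl.
  destruct (eqbcP h x) as [->|Hh].
  - destruct (eqbcP x gone); [contradiction|]. simpl. rewrite eqbc_refl. reflexivity.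
  - destruct (eqbc h gone && (0 <=? n)%Z); simpl;
      destruct (eqbcP h x); solve [contradiction | reflexivity].
Qed.

Lemma ray_shift_at :
  ray_mul x y · shift_at x = origin_mul x y · (shift_at x · ray_mul x y).
Proof.
  apply perm_ext. intros [[h n] m]. simpl.
  destruct (eqbcP h x) as [->|Hh]; simpl; [|rewrite !(eqbc_neq h x Hh); reflexivity].
  destruct (Z.leb_spec 0 n); destruct (Z.leb_spec 0 (n + 1)); try lia;
    simpl; repeat (rewrite eqbc_refl; simpl).
  - replace (n + 1 =? 0)%Z with false by (symmetry; apply Z.eqb_neq; lia). reflexivity.
  - replace n with (-1)%Z by lia. reflexivity.
  - replace (n + 1 =? 0)%Z with false by (symmetry; apply Z.eqb_neq; lia). reflexivity.
Qed.

Lemma fold_conj_origin : fold x · (origin_mul x y · (fold x)⁻¹) = parity_mul y true.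
Proof.
  apply perm_ext. intros [[h n] m]. cbn [gmul Sym perm_mul perm_inv ginv fold pf pg].
  unfold origin_mul. rewrite parity_mul_pf.
  destruct (Z.odd n) eqn:Eo; cbn [Bool.eqb].
  - rewrite fold_fun_odd, stack_if_pf, eqbc_refl by exact Eo. cbn [andb Z.eqb pf head_mul].
    rewrite fold_fun_origin. cbn [head_mul_fun scons fst snd].
    rewrite odd_div2K by exact Eo. reflexivity.
  - destruct (eqbc h x && (n =? 0)%Z) eqn:E.
    + apply andb_true_iff in E. destruct E as [E1 E2].
      destruct (eqbcP h x); [subst h | discriminate]. apply Z.eqb_eq in E2. subst n.
      rewrite (fold_fun_origin x m), stack_if_pf.
      replace (2 * snd (m O) + 1 =? 0)%Z with false by (symmetry; apply Z.eqb_neq; lia).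
      rewrite andb_false_r. pose proof (fold_funK x (x, 0%Z, m)) as K.
      rewrite fold_fun_origin in K. exact K.
    + rewrite fold_fun_fix, stack_if_pf, E by assumption. apply fold_fun_fix; assumption.
Qed.

Lemma shift_conj_parity (b : bool) :
  shift · (parity_mul y b · shift⁻¹) = parity_mul y (negb b).
Proof.
  apply perm_ext. intros [[h n] m]. simpl.
  rewrite Z.odd_sub. simpl.
  destruct (Z.odd n), b; simpl; f_equal; f_equal; lia.
Qed.

Lemma parity_mul_lmul : parity_mul y false · parity_mul y true = lmul y.
Proof.
  apply perm_ext. intros [[h n] m]. cbn [gmul Sym perm_mul pf].
  rewrite parity_mul_pf.
  destruct (Z.odd n) eqn:Eo; cbn [Bool.eqb]; rewrite parity_mul_pf, Eo; reflexivity.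
Qed.

End Relations.

(* A commutator trick yields [origin_mul x y]; its conjugate by [fold x] acts as
   [lmul y] on the odd levels, and a [shift] of that on the even ones. *)
Theorem normal_lmul (x y : L) (P : Sym X -> Prop) :
  x <> gone -> is_normal _ P -> P (lmul x) -> P (lmul y).
Proof.
  intros Hx HP Px.
  assert (Porigin : P (origin_mul x y)).
  { apply (normal_commutator P HP (lmul x) (ray_mul gone y) (shift_at x) (ray_mul x y)).
    - exact Px.
    - apply lmul_ray.
    - apply ray_shift_at_comm, Hx.
    - apply ray_shift_at. }
  assert (Podd : P (parity_mul y true)).
  { rewrite <- (fold_conj_origin x y). apply normalJ; assumption. }
  assert (Peven : P (parity_mul y false)).
  { pose proof (shift_conj_parity y true) as E. cbn [negb] in E.
    rewrite <- E. apply normalJ; assumption. }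
  rewrite <- parity_mul_lmul. apply normalM; assumption.
Qed.

End Swindle.

Section DirectLimit.
Variable L : nat -> group.
Variable e : forall n, hom (L n) (L (S n)).

Definition coherent_from (n0 : nat) (u : forall n, L n) : Prop :=
  forall n, n0 <= n -> u (S n) = e n (u n).

Definition thread := {u : forall n, L n | exists n0, coherent_from n0 u}.

Lemma thread_ext (u v : thread) : (forall n, proj1_sig u n = proj1_sig v n) -> u = v.
Proof.
  intro E. apply eq_sig_hprop; [intros; apply proof_irrelevance|].
  apply functional_extensionality_dep, E.
Qed.

Definition thread_mul (u v : thread) : thread.
Proof.
  refine (exist _ (fun n => proj1_sig u n · proj1_sig v n) _).
  destruct u as [u [n0 Hu]], v as [v [n1 Hv]]. exists (Nat.max n0 n1).
  intros n Hn. simpl. rewrite hfunM, Hu, Hv by lia. reflexivity.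
Defined.

Definition thread_inv (u : thread) : thread.
Proof.
  refine (exist _ (fun n => (proj1_sig u n)⁻¹) _).
  destruct u as [u [n0 Hu]]. exists n0.
  intros n Hn. simpl. rewrite homV, Hu by lia. reflexivity.
Defined.

Definition thread_one : thread.
Proof.
  refine (exist _ (fun n => gone) _).
  exists 0. intros n _. rewrite hom1. reflexivity.
Defined.

Definition ThreadG : group.
Proof.
  refine (@Group thread thread_mul thread_inv thread_one _ _ _);
    intros; apply thread_ext; intro n; simpl; [apply mulgA | apply mul1g | apply mulVg].
Defined.

Definition eventually_one (u : ThreadG) : Prop :=
  exists n0, forall n, n0 <= n -> proj1_sig u n = gone.

Lemma eventually_one_normal : is_normal _ eventually_one.
Proof.
  split; [split; [|split]|].
  - exists 0. reflexivity.
  - intros u v [n0 Hu] [n1 Hv]. exists (Nat.max n0 n1). intros n Hn. simpl.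
    rewrite Hu, Hv by lia. apply mul1g.
  - intros u [n0 Hu]. exists n0. intros n Hn. simpl. rewrite Hu by lia. apply invg1.
  - intros u g [n0 Hu]. exists n0. intros n Hn. simpl.
    rewrite Hu, mul1g by lia. apply mulVg.
Qed.

Definition limit : group := QuotG eventually_one_normal.

Definition cast_level {a b : nat} (p : a = b) (c : L a) : L b :=
  eq_rect a (fun k => carrier (L k)) c b p.

Fixpoint from_level (M : nat) (c : L M) (n : nat) : L n :=
  match n with
  | 0 => match Nat.eq_dec M 0 with left p => cast_level p c | right _ => gone end
  | S k => match Nat.eq_dec M (S k) with
           | left p => cast_level p c
           | right _ => e k (from_level M c k)
           end
  end.

Lemma from_level_at (M : nat) (c : L M) : from_level M c M = c.
Proof.
  destruct M as [|M]; cbn [from_level];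
    [destruct (Nat.eq_dec 0 0) as [p|p] | destruct (Nat.eq_dec (S M) (S M)) as [p|p]];
    solve [rewrite (UIP_refl_nat _ p); reflexivity | contradiction p; reflexivity].
Qed.

Lemma from_level_S (M : nat) (c : L M) (n : nat) :
  M <= n -> from_level M c (S n) = e n (from_level M c n).
Proof. intro Hn. simpl. destruct (Nat.eq_dec M (S n)); [lia | reflexivity]. Qed.

Lemma from_level_mul (M : nat) (a b : L M) (n : nat) :
  from_level M (a · b) n = from_level M a n · from_level M b n.
Proof.
  induction n as [|n IH]; simpl;
    [destruct (Nat.eq_dec M 0) as [p|p] | destruct (Nat.eq_dec M (S n)) as [p|p]].
  - subst M. reflexivity.
  - symmetry. apply mul1g.
  - subst M. reflexivity.
  - rewrite IH, hfunM. reflexivity.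
Qed.

Definition level_hom (M : nat) : hom (L M) ThreadG.
Proof.
  refine (@Hom (L M) ThreadG
            (fun c => exist _ (from_level M c) (ex_intro _ M (from_level_S M c))) _).
  intros a b. apply thread_ext. intro n. apply from_level_mul.
Defined.

Definition limit_in (M : nat) : hom (L M) limit := hcomp (quot_hom _) (level_hom M).

Lemma limit_in_thread (u : thread) (n0 M : nat) :
  coherent_from n0 (proj1_sig u) -> n0 <= M -> limit_in M (proj1_sig u M) = qpi (u : ThreadG).
Proof.
  intros Hu HM. apply (qpi_eq eventually_one_normal). exists M. intros n Hn. simpl.
  assert (E : forall j, from_level M (proj1_sig u M) (j + M) = proj1_sig u (j + M)).
  { induction j as [|j IH]; [apply from_level_at|].
    change (S j + M) with (S (j + M)). rewrite from_level_S, IH, Hu by lia. reflexivity. }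
  replace n with ((n - M) + M) by lia. rewrite E. apply mulVg.
Qed.

Hypothesis e_inj : forall n (a b : L n), e n a = e n b -> a = b.

Lemma limit_in_inj (M : nat) (a b : L M) : limit_in M a = limit_in M b -> a = b.
Proof.
  intro E. apply (qpi_eq eventually_one_normal) in E. destruct E as [n0 Hn0].
  specialize (Hn0 (n0 + M) ltac:(lia)). simpl in Hn0. apply mulV_eq1 in Hn0.
  assert (Hj : forall j, from_level M a (j + M) = from_level M b (j + M) -> a = b).
  { induction j as [|j IH]; intro Ej; [rewrite !from_level_at in Ej; exact Ej|].
    apply IH, e_inj. rewrite <- !from_level_S by lia. exact Ej. }
  exact (Hj n0 Hn0).
Qed.

Hypothesis e_normal : forall n (x y : L n) (P : L (S n) -> Prop),
  x <> gone -> is_normal _ P -> P (e n x) -> P (e n y).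

Theorem limit_simple : (exists x : L 0, x <> gone) -> simple_group limit.
Proof.
  intros [x Hx]. split.
  - exists (limit_in 0 x). intro E. apply Hx, (limit_in_inj 0). rewrite hom1. exact E.
  - intros N HN.
    destruct (classic (exists z, N z /\ z <> gone)) as [[z [Nz Hz]]|Hno].
    + right. intro w.
      destruct (qpi_surj z) as [u ->], (qpi_surj w) as [v ->].
      destruct (proj2_sig u) as [n0 Hu], (proj2_sig v) as [n1 Hv].
      set (K := Nat.max n0 n1).
      rewrite <- (limit_in_thread u n0 (S K)) in Nz by (assumption || lia).
      rewrite <- (limit_in_thread v n1 (S K)) by (assumption || lia).
      rewrite Hu in Nz by lia. rewrite Hv by lia.
      apply (e_normal K (proj1_sig u K) (proj1_sig v K) (fun c => N (limit_in (S K) c))).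
      * intro E. apply Hz. rewrite <- (limit_in_thread u n0 K) by (assumption || lia).
        rewrite E. apply hom1.
      * apply normal_preimage, HN.
      * exact Nz.
    + left. intros z Nz. apply NNPP. intro Hz. apply Hno. exists z. split; assumption.
Qed.

End DirectLimit.

Fixpoint tower (G : group) (n : nat) : group :=
  match n with 0 => G | S k => Sym (swindle_space (tower G k)) end.

Definition simple_hull (G : group) : group :=
  limit (tower G) (fun n => lmul_hom (tower G n)).

Lemma simple_hull_simple (G : group) : (exists x : G, x <> gone) -> simple_group (simple_hull G).
Proof.
  apply (limit_simple (tower G)).
  - intros n. apply lmul_inj.
  - intros n x y P. apply normal_lmul.
Qed.

Definition simple_hull_in (G : group) : hom G (simple_hull G) :=
  limit_in (tower G) (fun n => lmul_hom (tower G n)) 0.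

Lemma simple_hull_in_inj (G : group) (a b : G) :
  simple_hull_in G a = simple_hull_in G b -> a = b.
Proof. apply limit_in_inj. intros n. apply lmul_inj. Qed.

Lemma subfunctor_normal (F : subfunctor) (G : group) : is_normal _ (sfun F G).
Proof. split; [apply sfun_sub | intros x g; apply (sfun_nat F (conj_hom g))]. Qed.

Lemma simple_normal_full (S : group) (N : S -> Prop) (s : S) :
  simple_group S -> is_normal _ N -> N s -> s <> gone -> forall t, N t.
Proof.
  intros [_ HS] HN Ns Hs. destruct (HS N HN) as [Htriv|Hfull].
  - contradiction (Hs (Htriv s Ns)).
  - exact Hfull.
Qed.

Theorem theorem3p4 (F : subfunctor) (HF : nontrivial_subfunctor F) (G : group) :
  exists S : group,
    simple_group S /\
    (exists f : hom G S, forall x y, f x = f y -> x = y) /\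
    (forall s : S, sfun F S s).
Proof.
  destruct HF as [H [h [Fh Hh]]].
  set (S := simple_hull (ProdG G H)).
  set (j := simple_hull_in (ProdG G H)).
  assert (HS : simple_group S).
  { apply simple_hull_simple. exists (@gone G, h). intro E. exact (Hh (f_equal snd E)). }
  exists S. split; [exact HS | split].
  - exists (hcomp j (inl_hom G H)). intros x y E.
    apply simple_hull_in_inj in E. exact (f_equal fst E).
  - apply (simple_normal_full S _ (j (inr_hom G H h)) HS (subfunctor_normal F S)).
    + apply sfun_nat, sfun_nat, Fh.
    + intro E. apply Hh.
      assert (Eh : inr_hom G H h = gone) by (apply simple_hull_in_inj; rewrite hom1; exact E).
      exact (f_equal snd Eh).
Qed.
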